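(* Let $L$ be an atomic $0$-distributive lattice with at least three atoms. Then $\operatorname{sdim}_M(G^c(L))$ is finite if and only if $G^c(L)$ is finite.
   Context: A lattice $L$ with $0$ is $0$-distributive if $a\wedge b=0$ and $a\wedge c=0$ imply $a\wedge(b\vee c)=0$; atomic means every nonzero element lies above an atom. $Z^*(L)=\{a\in L\setminus\{0\}:\ a\wedge b=0\text{ for some } b\neq 0\}$; $G^c(L)$ has vertex set $Z^*(L)$, distinct $a,b$ adjacent iff $a\wedge b\neq 0$ (connected under these hypotheses). For a connected graph $G$, a vertex $w$ strongly resolves $u,v$ if some shortest $u$–$w$ path contains $v$ or some shortest $v$–$w$ path contains $u$; a strong resolving set is a set $W$ such that every pair of distinct vertices is strongly resolved by some vertex of $W$; $\operatorname{sdim}_M(G)$ is the minimum cardinality of a strong resolving set. *)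

From mathcomp Require Import all_boot all_order.
Set Implicit Arguments. Unset Strict Implicit. Unset Printing Implicit Defensive.
Import Order.TTheory.

Section Lat.
Context {d : Order.disp_t} {L : bLatticeType d}.

Definition zero_distributive : Prop :=
  forall a b c : L, Order.meet a b = Order.bottom -> Order.meet a c = Order.bottom ->
    Order.meet a (Order.join b c) = Order.bottom.

Definition is_atom (a : L) : Prop :=
  a <> Order.bottom /\ forall x : L, (x <= a)%O -> x = Order.bottom \/ x = a.

Definition atomic : Prop :=
  forall x : L, x <> Order.bottom -> exists a, is_atom a /\ (a <= x)%O.

Definition at_least_three_atoms : Prop :=
  exists a b c : L, [/\ is_atom a, is_atom b & is_atom c] /\
                    [/\ a <> b, a <> c & b <> c].

Definition Zstar (a : L) : Prop :=
  a <> Order.bottom /\ exists b : L, b <> Order.bottom /\ Order.meet a b = Order.bottom.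

Definition Gc_adj (a b : L) : Prop := a <> b /\ Order.meet a b <> Order.bottom.
End Lat.

Section Graph.
Context {T : eqType} (V : T -> Prop) (E : T -> T -> Prop).

Fixpoint walk_from (x : T) (p : seq T) : Prop :=
  V x /\ match p with
         | [::] => True
         | y :: q => E x y /\ walk_from y q
         end.

(* x :: p is a u-w walk of length size p *)
Definition uw_walk (u w : T) (p : seq T) : Prop := walk_from u p /\ last u p = w.

Definition shortest_path (u w : T) (p : seq T) : Prop :=
  uw_walk u w p /\ forall q, uw_walk u w q -> size p <= size q.

Definition strongly_resolves (w u v : T) : Prop :=
  (exists p, shortest_path u w p /\ v \in u :: p) \/
  (exists p, shortest_path v w p /\ u \in v :: p).

Definition strong_resolving_set (W : T -> Prop) : Prop :=
  (forall w, W w -> V w) /\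
  forall u v, V u -> V v -> u <> v -> exists w, W w /\ strongly_resolves w u v.

Definition sdim_finite : Prop :=
  exists s : seq T, strong_resolving_set (fun w => w \in s).

Definition graph_finite : Prop :=
  exists s : seq T, forall x, V x -> x \in s.
End Graph.

From mathcomp Require Import all_boot all_order zify.
From mathcomp Require Import boolp classical_sets functions cardinality.
Set Implicit Arguments. Unset Strict Implicit. Unset Printing Implicit Defensive.
Import Order.TTheory.

(* Under the hypotheses, G^c(L) has diameter at most 2: two vertices with zero
   meet have the join of an atom below each as a common neighbour.  In a graph
   of diameter 2, a vertex w outside {u, v} strongly resolves u, v only if
   u - v - w (or v - u - w) is an induced path.  Twins (vertices above the same
   atoms) have the same neighbours and atoms are pairwise non-adjacent, so a
   strong resolving set must contain all but at most one vertex of each twin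
   class and all but at most one atom.  A finite one thus leaves finitely many
   atoms, hence finitely many twin classes, hence finitely many vertices.
   Conversely, a finite vertex set strongly resolves itself, since u lies on
   every shortest v-u path. *)

Lemma finite_set_inj {T : Type} {K : finType} (A : set T) (f : T -> K) :
  {in A &, injective f} -> finite_set A.
Proof.
have [->|/set0P [a _] injf] := eqVneq A set0; first by move=> _; exact: finite_set0.
apply: (sub_finite_set _ (finite_image ('pinv_(fun=> a) A f) (@finite_finset K (f @` A)))).
by move=> x Ax; exists (f x); [exists x | rewrite (pinvKV _ injf) ?inE].
Qed.

Section Walks.
Context {T : eqType} (V : T -> Prop) (E : T -> T -> Prop).
Local Notation uw_walk := (uw_walk V E).
Local Notation shortest_path := (shortest_path V E).

Lemma graph_finiteP : graph_finite V <-> finite_set V.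
Proof.
split=> [[s Vs]|/finite_seqP [s ->]]; last by exists s.
by apply: (sub_finite_set _ (finite_seq s)) => x /Vs.
Qed.

Lemma walk_from_head x p : walk_from V E x p -> V x.
Proof. by case: p => [|? ?] []. Qed.

Lemma walk_from_last x p : walk_from V E x p -> V (last x p).
Proof. by elim: p x => [|y p IH] x /= [Vx] // [_ /IH]. Qed.

Lemma uw_walk_split u v w p : uw_walk u w p -> v \in u :: p ->
  exists p1 p2, [/\ p = p1 ++ p2, uw_walk u v p1 & uw_walk v w p2].
Proof.
elim: p u => [|y q IH] u /= [Wu Lu]; rewrite inE.
  by move=> /eqP ->; exists [::], [::]; rewrite -Lu.
case/orP => [/eqP ->|/(IH y (conj Wu.2.2 Lu)) [p1 [p2 [-> W1 W2]]]].
  by exists [::], (y :: q); split=> //; split=> //; case: Wu.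
by exists (y :: p1), p2; case: W1 => W1 L1; case: Wu => Vu [Euy _].
Qed.

Lemma uw_walk_size_gt0 u w p : uw_walk u w p -> u <> w -> 0 < size p.
Proof. by case: p => [|? ?] // [_ /= ->]. Qed.

Lemma uw_walk_size1 u w p : uw_walk u w p -> size p = 1 -> E u w.
Proof. by case: p => [|y [|]] // [/= [_ [Euy _]] <-]. Qed.

Lemma shortest_path_exists u w q : uw_walk u w q -> exists p, shortest_path u w p.
Proof.
move=> Wq.
have hex : exists n, `[< exists p, uw_walk u w p /\ size p = n >].
  by exists (size q); apply/asboolP; exists q.
case: (ex_minnP hex) => n /asboolP [p [Wp <-]] minp.
by exists p; split=> // p' Wp'; apply: minp; apply/asboolP; exists p'.
Qed.

Lemma sdim_finite_of_finite :
  (forall u w, V u -> V w -> exists q, uw_walk u w q) ->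
  finite_set V -> sdim_finite V E.
Proof.
move=> conn /finite_seqP [s defV]; exists s.
split=> [w|u v Vu Vv _]; first by rewrite defV.
exists u; split; first by move: Vu; rewrite defV.
right; have [q Wq] := conn v u Vv Vu.
have [p [[Wp Lp] minp]] := shortest_path_exists Wq.
by exists p; split; [split | rewrite -Lp mem_last].
Qed.

Section Diameter2.
Hypothesis diam2 : forall u w, V u -> V w -> exists q, uw_walk u w q /\ size q <= 2.

Lemma shortest_path_through u v w p :
  shortest_path u w p -> v \in u :: p -> v <> u -> v <> w ->
  [/\ E u v, E v w & ~ E u w].
Proof.
move=> [[Wp Lp] minp] vp vu vw.
have [p1 [p2 [defp W1 W2]]] := uw_walk_split (conj Wp Lp) vp.
have Vw : V w by rewrite -Lp; exact: walk_from_last.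
have [q [Wq Sq]] := diam2 (walk_from_head Wp) Vw.
have := minp q Wq; rewrite defp size_cat => le_p.
have s1 := uw_walk_size_gt0 W1 (nesym vu).
have s2 := uw_walk_size_gt0 W2 vw.
split; [apply: uw_walk_size1 W1 _; lia | apply: uw_walk_size1 W2 _; lia |].
move=> Euw.
have Ww : uw_walk u w [:: w] := conj (conj (walk_from_head Wp) (conj Euw (conj Vw I))) erefl.
by have := minp _ Ww; rewrite defp size_cat /=; lia.
Qed.

Lemma strongly_resolves_diam2 w u v :
  strongly_resolves V E w u v -> u <> v -> w <> u -> w <> v ->
  [/\ E u v, E v w & ~ E u w] \/ [/\ E v u, E u w & ~ E v w].
Proof.
move=> [[p [sp vp]]|[p [sp up]]] uv wu wv; [left|right].
  exact: shortest_path_through sp vp (nesym uv) (nesym wv).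
exact: shortest_path_through sp up uv (nesym wu).
Qed.

End Diameter2.
End Walks.

Section AtomicZeroDistributive.
Context {d : Order.disp_t} {L : bLatticeType d}.
Hypothesis hat : atomic (L := L).
Hypothesis hzd : zero_distributive (L := L).
Hypothesis h3 : at_least_three_atoms (L := L).
Local Open Scope order_scope.

Lemma atom_meet_neq0 (a x y : L) : is_atom a -> a <= x -> a <= y -> x `&` y <> \bot.
Proof. by move=> [a0 _] ax ay xy0; apply: a0; apply/eqP; rewrite -lex0 -xy0 lexI ax. Qed.

Lemma meet_atoms_eq0 (a b : L) : is_atom a -> is_atom b -> a <> b -> a `&` b = \bot.
Proof.
move=> [a0 mina] [_ minb] ab; case: (mina _ (leIl a b)) => // aIb.
by have /minb [/a0|] : a <= b by rewrite -aIb leIr.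
Qed.

Lemma exists_atom_neq (p q : L) : exists r, [/\ is_atom r, r <> p & r <> q].
Proof.
have [a [b [c [[Aa Ab Ac] [ab ac bc]]]]] := h3.
have [ap|/eqP ap] := eqVneq a p; have [aq|/eqP aq] := eqVneq a q;
  try by exists a.
all: have [bp|/eqP bp] := eqVneq b p; have [bq|/eqP bq] := eqVneq b q;
  try by exists b.
all: by exists c; split; congruence.
Qed.

Lemma Zstar_atom (a : L) : is_atom a -> Zstar a.
Proof.
move=> Aa; split; first by case: Aa.
have [r [Ar ra _]] := exists_atom_neq a a.
exists r; split; first by case: Ar.
exact: meet_atoms_eq0 Aa Ar (nesym ra).
Qed.

(* The witness p \/ q is a zero-divisor by 0-distributivity: a third atom
   meets both p and q trivially. *)
Lemma Gc_diam2 (x y : L) : Zstar x -> Zstar y ->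
  exists q, uw_walk Zstar Gc_adj x y q /\ (size q <= 2)%N.
Proof.
move=> Zx Zy; have [<-|/eqP xy] := eqVneq x y; first by exists [::].
have [xy0|xyn0] := pselect (x `&` y = \bot); last by exists [:: y].
have [p [Ap px]] := hat Zx.1.
have [q [Aq qy]] := hat Zy.1.
have pq : p <> q by move=> pq; apply: (atom_meet_neq0 Aq _ qy xy0); rewrite -pq.
have [r [Ar rp rq]] := exists_atom_neq p q.
have Zpq : Zstar (p `|` q).
  split; first by move=> pq0; case: Ap => + _; apply; apply/eqP; rewrite -lex0 -pq0 leUl.
  exists r; split; first by case: Ar.
  by rewrite meetC; apply: hzd; apply: meet_atoms_eq0.
have x_pq : Gc_adj x (p `|` q).
  split; last exact: (atom_meet_neq0 Ap px (leUl _ _)).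
  by move=> xpq; apply: (atom_meet_neq0 Aq _ qy xy0); rewrite xpq leUr.
have pq_y : Gc_adj (p `|` q) y.
  split; last exact: (atom_meet_neq0 Aq (leUr _ _) qy).
  by move=> pqy; apply: (atom_meet_neq0 Ap px _ xy0); rewrite -pqy leUl.
by exists [:: p `|` q; y].
Qed.

Definition same_atoms (u v : L) := forall a, is_atom a -> (a <= u) = (a <= v).

Lemma same_atoms_Gc_adj (u v w : L) :
  same_atoms u v -> u <> w -> Gc_adj v w -> Gc_adj u w.
Proof.
move=> uv uw [_ /hat [a [Aa]]]; rewrite lexI => /andP [av aw].
by split=> //; apply: (atom_meet_neq0 Aa _ aw); rewrite uv.
Qed.

Lemma strong_resolving_set_mem (W : L -> Prop) (u v : L) :
  strong_resolving_set Zstar Gc_adj W -> Zstar u -> Zstar v -> u <> v ->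
  same_atoms u v \/ (is_atom u /\ is_atom v) -> W u \/ W v.
Proof.
move=> [_ resW] Zu Zv uv twins.
have [w [Ww rw]] := resW u v Zu Zv uv.
have [<-|wu] := pselect (w = u); first by left.
have [<-|wv] := pselect (w = v); first by right.
have no_induced_path x y : same_atoms x y \/ (is_atom x /\ is_atom y) -> x <> w ->
    ~ [/\ Gc_adj x y, Gc_adj y w & ~ Gc_adj x w].
  move=> [sxy|[Ax Ay]] xw [[xy xyn0] yw xwn]; first exact/xwn/(same_atoms_Gc_adj sxy).
  exact/xyn0/meet_atoms_eq0.
exfalso; case: (strongly_resolves_diam2 Gc_diam2 rw uv wu wv).
  exact: no_induced_path twins (nesym wu).
apply: no_induced_path (nesym wv).
by case: twins => [s|[Au Av]]; [left=> a Aa; rewrite s | right].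
Qed.

Lemma finite_atoms (s : seq L) :
  strong_resolving_set Zstar Gc_adj (fun w => w \in s) -> finite_set (@is_atom d L).
Proof.
move=> res_s.
have [[a0 [A0 a0s]]|all_in] := pselect (exists a0, is_atom a0 /\ a0 \notin s).
  apply: (@sub_finite_set _ _ ([set` s] `|` [set a0])%classic); last by rewrite finite_setU.
  move=> a Aa; have [->|aa0] := pselect (a = a0); first by right.
  left; have [//|a0_in] := strong_resolving_set_mem res_s (Zstar_atom Aa) (Zstar_atom A0) aa0
    (or_intror (conj Aa A0)).
  by rewrite a0_in in a0s.
apply: (sub_finite_set _ (finite_seq s)) => a Aa /=.
by apply: contrapT => ans; apply: all_in; exists a; split=> //; apply/negP.
Qed.

Lemma Zstar_finite (s : seq L) :
  strong_resolving_set Zstar Gc_adj (fun w => w \in s) -> finite_set (@Zstar d L).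
Proof.
move=> res_s; have /finite_seqP [As defAs] := finite_atoms res_s.
pose atoms_below x := map_tuple (fun a => a <= x) (in_tuple As).
have fin_out : finite_set (Zstar `\` [set` s])%classic.
  apply: (@finite_set_inj _ _ _ atoms_below) => x y.
  rewrite !inE => -[Zx xs] [Zy ys] /(congr1 val) /eq_in_map same_xy.
  apply: contrapT => xy.
  have twins : same_atoms x y by move=> a; rewrite defAs => /same_xy.
  by case: (strong_resolving_set_mem res_s Zx Zy xy (or_introl twins)).
apply: (@sub_finite_set _ _ ([set` s] `|` (Zstar `\` [set` s]))%classic).
  by move=> x Zx; have [xs|xs] := pselect (x \in s); [left | right].
by rewrite finite_setU.
Qed.

End AtomicZeroDistributive.

Theorem corollary3p3 (d : Order.disp_t) (L : bLatticeType d) :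
  atomic (L := L) -> zero_distributive (L := L) -> at_least_three_atoms (L := L) ->
  (sdim_finite (@Zstar d L) (@Gc_adj d L) <-> graph_finite (@Zstar d L)).
Proof.
move=> hat hzd h3; split=> [[s res_s]|/graph_finiteP finZ].
  exact/graph_finiteP/(Zstar_finite hat hzd h3 res_s).
apply: sdim_finite_of_finite finZ => u w Zu Zw.
by have [q [Wq _]] := Gc_diam2 hat hzd h3 Zu Zw; exists q.
Qed.
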